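(* Let $n\ge 2$, $m\ge1$, and let $T_{ij}\in\mathbb R^{m\times m}$ ($i,j\in\{1,\dots,n\}$) be similarity matrices with $T_{ij}=T_{ji}^\top$. Suppose that for every pair $i,j$ the maximization $\max_{P\in\mathcal P_m}\operatorname{tr}(P^\top T_{ij})$ has a unique maximizer $P_{ij}$, and that $P_{ij}P_{jk}=P_{ik}$ for all $i,j,k$. Then Algorithm 2 (with either Prim's or Kruskal's edge order, any initial permutation matrices, and any terminating sequence of inner coordinate updates) outputs $A_1,\dots,A_n$ attaining $\max_{A_1,\dots,A_n\in\mathcal P_m}\sum_{i=1}^n\sum_{j=1}^n\operatorname{tr}(A_iT_{ij}A_j^\top)$.
   Context: $\mathcal P_m$ denotes the set of $m\times m$ permutation matrices; $f(T_{ij}):=\max_{P\in\mathcal P_m}\operatorname{tr}(P^\top T_{ij})$. Algorithm 2: (1) Form the complete undirected graph $G$ on vertices $v_1,\dots,v_n$ where edge $(v_i,v_j)$, $i\ne j$, has weight $f(T_{ij})$, and compute a Maximum Spanning Tree with edge set $E'$. (2) Order the edges of $E'$ either in Prim's order (the order in which Prim's algorithm adds them, so that each processed edge joins exactly one new vertex to the current tree) or in Kruskal's order (decreasing weight). (3) Set $S_i\leftarrow\{v_i\}$ and initialize each $A_i$ arbitrarily in $\mathcal P_m$. (4) For each edge $(v_i,v_j)\in E'$ in that order: compute $\hat P=\arg\max_{P\in\mathcal P_m}\operatorname{tr}(P^\top A_iT_{ij}A_j^\top)$; set $A_{j'}\leftarrow\hat PA_{j'}$ for all $v_{j'}\in S_j$;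 let $S'=S_i\cup S_j$ and set $S_k\leftarrow S'$ for all $v_k\in S'$; then repeatedly pick $v_k\in S'$ and replace $A_k$ by a maximizer $\arg\max_{P\in\mathcal P_m}\operatorname{tr}\big(P^\top\sum_{v_{k'}\in S',\,k'\ne k}A_{k'}T_{kk'}\big)$ until convergence. The output is the final $A_1,\dots,A_n$. *)

From HB Require Import structures.
From mathcomp Require Import all_boot all_order all_algebra all_fingroup.
Set Implicit Arguments. Unset Strict Implicit. Unset Printing Implicit Defensive.
Import Order.TTheory GRing.Theory Num.Theory.
Local Open Scope ring_scope.

Section AlgDefs.
Variables (R : realFieldType) (n m : nat).
Variable T : 'I_n -> 'I_n -> 'M[R]_m.

Definition is_max_perm (M P : 'M[R]_m) : Prop :=
  is_perm_mx P /\
  forall Q : 'M[R]_m, is_perm_mx Q -> \tr (Q^T *m M) <= \tr (P^T *m M).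

(* f(M) = max_{P in P_m} tr(P^T M); the identity is a valid start value. *)
Definition fval (M : 'M[R]_m) : R :=
  \big[Num.max/(\tr M)]_(s : 'S_m) \tr ((perm_mx s)^T *m M).

Definition wt (e : 'I_n * 'I_n) : R := fval (T e.1 e.2).

Definition edge_rel (E : seq ('I_n * 'I_n)) : rel 'I_n :=
  fun u v => has (fun e => ((e.1 == u) && (e.2 == v)) || ((e.1 == v) && (e.2 == u))) E.

Definition spanning_tree (E : seq ('I_n * 'I_n)) : Prop :=
  size E = n.-1 /\ all (fun e => e.1 != e.2) E /\
  forall u v, connect (edge_rel E) u v.

Definition tree_weight (E : seq ('I_n * 'I_n)) : R := \sum_(e <- E) wt e.

Definition max_spanning_tree (E : seq ('I_n * 'I_n)) : Prop :=
  spanning_tree E /\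
  forall E', spanning_tree E' -> tree_weight E' <= tree_weight E.

(* Prim's order: starting from a root r, each edge joins exactly one new vertex
   to the current tree. *)
Definition prim_order (E : seq ('I_n * 'I_n)) : Prop :=
  exists r : 'I_n, forall t, (t < size E)%N ->
    let e := nth (r, r) E t in
    let V := r |: [set v | has (fun e' => (e'.1 == v) || (e'.2 == v)) (take t E)] in
    (e.1 \in V) != (e.2 \in V).

Definition kruskal_order (E : seq ('I_n * 'I_n)) : Prop :=
  sorted (fun e1 e2 => wt e2 <= wt e1) E.

Definition upd (A : 'I_n -> 'M[R]_m) (k : 'I_n) (M : 'M[R]_m) : 'I_n -> 'M[R]_m :=
  fun k' => if k' == k then M else A k'.

Definition inner_update (Sp : {set 'I_n}) (A A' : 'I_n -> 'M[R]_m) : Prop :=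
  exists k, k \in Sp /\
    exists P, is_max_perm (\sum_(k' in Sp | k' != k) (A k' *m T k' k)) P /\
      A' = upd A k P.

Inductive inner_run (Sp : {set 'I_n}) : ('I_n -> 'M[R]_m) -> ('I_n -> 'M[R]_m) -> Prop :=
  | inner_stop A : inner_run Sp A A
  | inner_step A A1 A2 : inner_update Sp A A1 -> inner_run Sp A1 A2 -> inner_run Sp A A2.

Inductive alg_run : seq ('I_n * 'I_n) -> ('I_n -> 'M[R]_m) -> ('I_n -> {set 'I_n}) ->
                    ('I_n -> 'M[R]_m) -> Prop :=
  | run_nil A S : alg_run [::] A S A
  | run_cons (i j : 'I_n) E A S (Phat : 'M[R]_m) A2 A3 :
      is_max_perm (A i *m T i j *m (A j)^T) Phat ->
      inner_run (S i :|: S j) (fun k => if k \in S j then Phat *m A k else A k) A2 ->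
      alg_run E A2 (fun k => if k \in S i :|: S j then S i :|: S j else S k) A3 ->
      alg_run ((i, j) :: E) A S A3.

Definition objective (A : 'I_n -> 'M[R]_m) : R :=
  \sum_(i < n) \sum_(j < n) \tr (A i *m T i j *m (A j)^T).

End AlgDefs.

From HB Require Import structures.
From mathcomp Require Import all_boot all_order all_algebra all_fingroup.
Import Order.TTheory GRing.Theory Num.Theory.
Local Open Scope ring_scope.
Set Implicit Arguments. Unset Strict Implicit. Unset Printing Implicit Defensive.

(* Say that A is aligned on a set S of vertices when A_a^T A_b = P_ab for all
   a, b in S.  A family aligned on all vertices is optimal: each term
   tr(A_i T_ij A_j^T) equals tr((A_i^T A_j)^T T_ij) = tr(P_ij^T T_ij), which is
   the largest value any single term can take.  Algorithm 2 keeps every cluster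
   aligned: the merge permutation P-hat glues two aligned clusters into an
   aligned one (uniqueness of P_ij forces A_i^T P-hat A_j = P_ij), and an inner
   update cannot break alignment, because the updated A_k maximizes a sum of
   terms each of which is already at its individual maximum.  Since the edges
   of a spanning tree connect all vertices, the last cluster is everything. *)

Lemma perm_mx_mulTmx (R : pzRingType) m (P : 'M[R]_m) :
  is_perm_mx P -> P^T *m P = 1%:M.
Proof. by case/is_perm_mxP=> s ->; rewrite tr_perm_mx -perm_mxM mulVg perm_mx1. Qed.

Lemma perm_mx_mulmxT (R : pzRingType) m (P : 'M[R]_m) :
  is_perm_mx P -> P *m P^T = 1%:M.
Proof. by case/is_perm_mxP=> s ->; rewrite tr_perm_mx -perm_mxM mulgV perm_mx1. Qed.

Lemma mxtrace_mulmx_trmx (R : comPzRingType) m (X Y M : 'M[R]_m) :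
  \tr (X *m M *m Y^T) = \tr ((X^T *m Y)^T *m M).
Proof. by rewrite mxtrace_mulC trmx_mul trmxK !mulmxA. Qed.

Lemma mxtrace_trmx_mulmx (R : comPzRingType) m (Q X M : 'M[R]_m) :
  \tr (Q^T *m (X *m M)) = \tr ((X^T *m Q)^T *m M).
Proof. by rewrite trmx_mul trmxK mulmxA. Qed.

Lemma mxtrace_trmx_mul_conj (R : comPzRingType) m (Q X Y M : 'M[R]_m) :
  \tr (Q^T *m (X *m M *m Y^T)) = \tr ((X^T *m Q *m Y)^T *m M).
Proof.
by rewrite !trmx_mul !trmxK !mulmxA mxtrace_mulC !mulmxA.
Qed.

Lemma ler_sum_eq_termwise (R : numDomainType) (I : finType) (P : pred I)
    (F G : I -> R) :
  (forall i, P i -> F i <= G i) -> \sum_(i | P i) G i <= \sum_(i | P i) F i ->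
  forall i, P i -> F i = G i.
Proof.
move=> leFG leGF i Pi; apply/eqP; rewrite eq_sym -subr_eq0; apply/eqP.
apply: (@psumr_eq0P _ _ P (fun i => G i - F i)) Pi => [j Pj|].
  by rewrite subr_ge0 leFG.
apply/eqP; rewrite eq_le sumr_ge0 ?andbT => [|j /leFG]; last by rewrite subr_ge0.
by rewrite sumrB subr_le0.
Qed.

Lemma connect_edge_rel_eq n (T : eqType) (f : 'I_n -> T) (E : seq ('I_n * 'I_n)) :
  (forall e, e \in E -> f e.1 = f e.2) ->
  forall u v, connect (edge_rel E) u v -> f u = f v.
Proof.
move=> fE u v uv; apply/eqP.
have closed_fv : closed (edge_rel E) [pred x | f x == f v].
  by move=> x y /hasP[e eE /orP[]/andP[/eqP <- /eqP <-]]; rewrite !inE (fE e eE).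
by have := closed_connect closed_fv uv; rewrite !inE eqxx => ->.
Qed.

Section PartitionMap.
Variable T : finType.

Definition partition_map (S : T -> {set T}) : Prop :=
  forall a b, (b \in S a) = (S b == S a).

Definition merge_clusters (S : T -> {set T}) (i j : T) : T -> {set T} :=
  fun k => if k \in S i :|: S j then S i :|: S j else S k.

Variable S : T -> {set T}.
Hypothesis S_partition : partition_map S.

Lemma partition_map_self a : a \in S a.
Proof. by rewrite S_partition. Qed.

Lemma partition_map_eq a b : b \in S a -> S b = S a.
Proof. by rewrite S_partition => /eqP. Qed.

Lemma partition_map_disjoint i a b : a \notin S i -> b \in S a -> b \notin S i.
Proof.
move=> aSi /partition_map_eq Sba; apply: contra aSi => /partition_map_eq Sbi.
by rewrite -Sbi Sba partition_map_self.
Qed.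

Lemma partition_map_disjointU i j a b :
  a \notin S i :|: S j -> b \in S a -> b \notin S i :|: S j.
Proof.
by rewrite !in_setU !negb_or => /andP[aSi aSj] bSa;
   rewrite (partition_map_disjoint aSi) ?(partition_map_disjoint aSj).
Qed.

Lemma partition_map_merge i j : partition_map (merge_clusters S i j).
Proof.
set U := S i :|: S j.
have notU k : k \notin U -> (U == S k) = false.
  by move=> kU; apply: contraNF kU => /eqP->; rewrite partition_map_self.
move=> a b; rewrite /merge_clusters -/U.
case: (boolP (a \in U)) => aU; case: (boolP (b \in U)) => bU.
- by rewrite eqxx.
- by rewrite eq_sym notU // (negbTE bU).
- by rewrite notU //; apply/negbTE; apply: contraL bU; apply: partition_map_disjointU.
- exact: S_partition.
Qed.

Lemma sub_merge_clusters i j a : {subset S a <= merge_clusters S i j a}.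
Proof.
move=> b bSa; rewrite /merge_clusters.
by case: ifP => // /setUP[] /partition_map_eq <-; rewrite in_setU bSa ?orbT.
Qed.

End PartitionMap.

Lemma partition_map_set1 (T : finType) : partition_map (fun a : T => [set a]).
Proof. by move=> a b; rewrite in_set1 (inj_eq set1_inj). Qed.

Section Alignment.
Variables (R : realFieldType) (n m : nat).
Variables (T Pc : 'I_n -> 'I_n -> 'M[R]_m).
Hypothesis Pc_unique_max : forall i j,
  is_max_perm (T i j) (Pc i j) /\ forall Q, is_max_perm (T i j) Q -> Q = Pc i j.
Hypothesis Pc_cycle : forall i j k, Pc i j *m Pc j k = Pc i k.

Lemma Pc_perm i j : is_perm_mx (Pc i j).
Proof. by case: (Pc_unique_max i j) => [[]]. Qed.

Lemma Pc_max i j Q :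
  is_perm_mx Q -> \tr (Q^T *m T i j) <= \tr ((Pc i j)^T *m T i j).
Proof. by case: (Pc_unique_max i j) => [[_ Pc_ge] _]; apply: Pc_ge. Qed.

Lemma Pc_unique i j Q :
  is_perm_mx Q -> \tr ((Pc i j)^T *m T i j) <= \tr (Q^T *m T i j) -> Q = Pc i j.
Proof.
move=> Qperm Q_ge; case: (Pc_unique_max i j) => [[_ Pc_ge] Pc_uniq].
by apply: Pc_uniq; split=> // Q' /Pc_ge/le_trans; apply.
Qed.

Lemma Pc_id i : Pc i i = 1%:M.
Proof.
have := congr1 (mulmx (Pc i i)^T) (Pc_cycle i i i).
by rewrite mulmxA perm_mx_mulTmx ?Pc_perm // mul1mx => ->.
Qed.

Lemma trmx_Pc i j : (Pc i j)^T = Pc j i.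
Proof.
have := congr1 (mulmx (Pc i j)^T) (Pc_cycle i j i).
by rewrite Pc_id mulmxA perm_mx_mulTmx ?Pc_perm // mul1mx mulmx1 => ->.
Qed.

Definition perm_family (A : 'I_n -> 'M[R]_m) : Prop := forall a, is_perm_mx (A a).

Definition aligned_on (S : {set 'I_n}) (A : 'I_n -> 'M[R]_m) : Prop :=
  forall a b, a \in S -> b \in S -> (A a)^T *m A b = Pc a b.

Lemma aligned_on_set1 A : perm_family A -> forall i, aligned_on [set i] A.
Proof. by move=> Aperm i a b /set1P-> /set1P->; rewrite perm_mx_mulTmx ?Pc_id. Qed.

Lemma aligned_on_eq (S : {set 'I_n}) (A A' : 'I_n -> 'M[R]_m) :
  {in S, A' =1 A} -> aligned_on S A -> aligned_on S A'.
Proof. by move=> eqA alA a b aS bS; rewrite !eqA //; apply: alA. Qed.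

Lemma maximizer_aligned (S : {set 'I_n}) A k (P : 'M[R]_m) :
  perm_family A -> aligned_on S A -> k \in S ->
  is_max_perm (\sum_(k' in S | k' != k) (A k' *m T k' k)) P ->
  forall k', k' \in S -> k' != k -> (A k')^T *m P = Pc k' k.
Proof.
move=> Aperm alA kS [Pperm Pmax].
set X := fun k' => A k' *m T k' k.
have tr_sum Q : \tr (Q^T *m \sum_(k' in S | k' != k) X k') =
    \sum_(k' in S | k' != k) \tr (Q^T *m X k').
  by rewrite mulmx_sumr; apply: raddf_sum.
have le_term k' : (k' \in S) && (k' != k) ->
    \tr (P^T *m X k') <= \tr ((A k)^T *m X k').
  case/andP=> k'S _; rewrite !mxtrace_trmx_mulmx alA //.
  by apply: Pc_max; rewrite is_perm_mxMl ?is_perm_mx_tr.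
have le_sum : \sum_(k' in S | k' != k) \tr ((A k)^T *m X k') <=
    \sum_(k' in S | k' != k) \tr (P^T *m X k').
  by rewrite -!tr_sum; apply: Pmax.
move=> k' k'S k'k; apply: Pc_unique; first by rewrite is_perm_mxMl ?is_perm_mx_tr.
have /(_ k') := ler_sum_eq_termwise le_term le_sum; rewrite k'S k'k => /(_ isT).
by rewrite !mxtrace_trmx_mulmx alA // => ->.
Qed.

Lemma aligned_on_upd (S : {set 'I_n}) A k (P : 'M[R]_m) :
  is_perm_mx P -> aligned_on S A ->
  (forall k', k' \in S -> k' != k -> (A k')^T *m P = Pc k' k) ->
  aligned_on S (upd A k P).
Proof.
move=> Pperm alA alP a b aS bS; rewrite /upd.
case: (eqVneq a k) => [->|ak]; case: (eqVneq b k) => [->|bk].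
- by rewrite perm_mx_mulTmx ?Pc_id.
- by rewrite -trmx_Pc -alP // trmx_mul trmxK.
- exact: alP.
- exact: alA.
Qed.

Lemma inner_update_aligned (S : {set 'I_n}) (A A' : 'I_n -> 'M[R]_m) :
  inner_update T S A A' -> perm_family A -> aligned_on S A ->
  [/\ perm_family A', aligned_on S A' & {in [predC S], A' =1 A}].
Proof.
case=> k [kS [P [Pmax ->]]] Aperm alA; have [Pperm _] := Pmax.
split; first by move=> a; rewrite /upd; case: ifP.
  exact: aligned_on_upd (maximizer_aligned Aperm alA kS Pmax).
by move=> a; rewrite inE /upd; case: eqP => // -> /negP.
Qed.

Lemma inner_run_aligned (S : {set 'I_n}) (A A' : 'I_n -> 'M[R]_m) :
  inner_run T S A A' -> perm_family A -> aligned_on S A ->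
  [/\ perm_family A', aligned_on S A' & {in [predC S], A' =1 A}].
Proof.
elim=> [A0 | A0 A1 A2 step _ IH] Aperm alA; first by [].
have [A1perm alA1 eqA1] := inner_update_aligned step Aperm alA.
have [A2perm alA2 eqA2] := IH A1perm alA1.
by split=> // a aS; rewrite eqA2 // eqA1.
Qed.

Definition left_mul_on (S : {set 'I_n}) (P : 'M[R]_m) (A : 'I_n -> 'M[R]_m) :
    'I_n -> 'M[R]_m :=
  fun k => if k \in S then P *m A k else A k.

Lemma merge_maximizer_aligned A i j (Phat : 'M[R]_m) :
  perm_family A -> is_max_perm (A i *m T i j *m (A j)^T) Phat ->
  (A i)^T *m Phat *m A j = Pc i j.
Proof.
move=> Aperm [Phat_perm Phat_max].
apply: Pc_unique; first by rewrite is_perm_mxMr // is_perm_mxMl ?is_perm_mx_tr.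
rewrite -mxtrace_trmx_mul_conj.
have -> : \tr ((Pc i j)^T *m T i j) =
    \tr ((A i *m Pc i j *m (A j)^T)^T *m (A i *m T i j *m (A j)^T)).
  rewrite mxtrace_trmx_mul_conj !mulmxA perm_mx_mulTmx // mul1mx.
  by rewrite -mulmxA perm_mx_mulTmx // mulmx1.
by apply: Phat_max; rewrite is_perm_mxMr ?is_perm_mx_tr // is_perm_mxMl // Pc_perm.
Qed.

Lemma merge_aligned (Si Sj : {set 'I_n}) A i j (Phat : 'M[R]_m) :
  perm_family A -> aligned_on Si A -> aligned_on Sj A -> i \in Si -> j \in Sj ->
  is_max_perm (A i *m T i j *m (A j)^T) Phat ->
  perm_family (left_mul_on Sj Phat A) /\ aligned_on (Si :|: Sj) (left_mul_on Sj Phat A).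
Proof.
move=> Aperm alSi alSj iSi jSj Phat_max; have [Phat_perm _] := Phat_max.
have cross a b : a \in Si -> b \in Sj -> (A a)^T *m Phat *m A b = Pc a b.
  move=> aSi bSj; rewrite -(Pc_cycle a i) -(Pc_cycle i j).
  rewrite -(merge_maximizer_aligned Aperm Phat_max) -(alSi a i) // -(alSj j b) //.
  rewrite !mulmxA -[_ *m A i *m _]mulmxA perm_mx_mulmxT // mulmx1.
  by rewrite -[_ *m A j *m _]mulmxA perm_mx_mulmxT // mulmx1.
split=> [a | a b].
  by rewrite /left_mul_on; case: ifP => // _; rewrite is_perm_mxMl.
rewrite /left_mul_on !in_setU.
case: (boolP (a \in Sj)) => aSj; case: (boolP (b \in Sj)) => bSj;
  rewrite ?orbT ?orbF => aS bS.
- by rewrite trmx_mul -mulmxA [Phat^T *m _]mulmxA perm_mx_mulTmx // mul1mx alSj.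
- by rewrite -trmx_Pc -cross // !trmx_mul trmxK mulmxA.
- by rewrite mulmxA cross.
- exact: alSi.
Qed.

Lemma alg_run_aligned E A (S : 'I_n -> {set 'I_n}) A' :
  alg_run T E A S A' -> partition_map S -> perm_family A ->
  (forall a, aligned_on (S a) A) ->
  exists S' : 'I_n -> {set 'I_n},
    [/\ partition_map S', perm_family A', forall a, aligned_on (S' a) A',
        forall a, {subset S a <= S' a} & forall e, e \in E -> e.2 \in S' e.1].
Proof.
elim=> [A0 S0 | i j E0 A0 S0 Phat A2 A3 Phat_max inner _ IH] S0part A0perm alA0.
  by exists S0; split=> // a b.
have [A1perm alA1] := merge_aligned A0perm (alA0 i) (alA0 j)
  (partition_map_self S0part i) (partition_map_self S0part j) Phat_max.
have [A2perm alA2 eqA2] := inner_run_aligned inner A1perm alA1.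
have alA2' a : aligned_on (merge_clusters S0 i j a) A2.
  rewrite /merge_clusters; case: ifPn => // aU.
  apply: aligned_on_eq (alA0 a) => b bSa.
  have := partition_map_disjointU S0part aU bSa.
  rewrite in_setU negb_or => /andP[/negbTE bSi /negbTE bSj].
  by rewrite eqA2 ?inE ?bSi ?bSj.
have [S3 [S3part A3perm alA3 sub3 edges3]] :=
  IH (partition_map_merge S0part i j) A2perm alA2'.
exists S3; split=> // [a b bSa | e]; first exact/sub3/(sub_merge_clusters S0part).
rewrite in_cons => /predU1P[-> | /edges3 //]; apply: sub3.
by rewrite /= in_setU (partition_map_self S0part i) /=
   in_setU (partition_map_self S0part j) orbT.
Qed.

Lemma objective_le_aligned A B :
  perm_family A -> aligned_on setT A -> perm_family B -> objective T B <= objective T A.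
Proof.
move=> Aperm alA Bperm; apply: ler_sum => i _; apply: ler_sum => j _.
rewrite !mxtrace_mulmx_trmx alA ?inE //.
by apply: Pc_max; rewrite is_perm_mxMl ?is_perm_mx_tr.
Qed.

End Alignment.

Theorem theorem3 (R : realFieldType) (n m : nat) (T : 'I_n -> 'I_n -> 'M[R]_m)
  (Pc : 'I_n -> 'I_n -> 'M[R]_m) :
  (2 <= n)%N -> (1 <= m)%N ->
  (forall i j, T i j = (T j i)^T) ->
  (forall i j, is_max_perm (T i j) (Pc i j) /\
               forall Q, is_max_perm (T i j) Q -> Q = Pc i j) ->
  (forall i j k, Pc i j *m Pc j k = Pc i k) ->
  forall E : seq ('I_n * 'I_n),
  max_spanning_tree T E -> prim_order E \/ kruskal_order T E ->
  forall A0 : 'I_n -> 'M[R]_m, (forall i, is_perm_mx (A0 i)) ->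
  forall A : 'I_n -> 'M[R]_m, alg_run T E A0 (fun i => [set i]) A ->
  (forall i, is_perm_mx (A i)) /\
  (forall B : 'I_n -> 'M[R]_m, (forall i, is_perm_mx (B i)) ->
     objective T B <= objective T A).
Proof.
move=> _ _ _ Pc_unique_max Pc_cycle E [[_ [_ E_connected]] _] _ A0 A0perm A run.
have [S [Spart Aperm alA _ E_in_S]] := alg_run_aligned Pc_unique_max Pc_cycle run
  (@partition_map_set1 _) A0perm (aligned_on_set1 Pc_unique_max Pc_cycle A0perm).
have S_const u v : S u = S v.
  apply: (connect_edge_rel_eq _ (E_connected u v)) => e.
  by move/E_in_S/(partition_map_eq Spart).
have alA_all : aligned_on Pc setT A.
  move=> a b _ _; apply: alA (partition_map_self Spart a) _.
  by rewrite (S_const a b) partition_map_self.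
by split=> // B Bperm; apply: objective_le_aligned.
Qed.
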